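(* Let $(\mathfrak{k},\partial)$ be a differential graded Lie algebra over a field of characteristic $0$, $\mathfrak{k}=\bigoplus_{i\le0}\mathfrak{k}^i$ with $\mathfrak{k}^i=0$ for $i\ll0$, and $\partial$ of degree $+1$. Assume there is a subspace $\mathfrak{l}$ of the center $\mathfrak{z}$ of $\mathfrak{k}$ such that $\partial$ vanishes on $\mathfrak{l}$ and the inclusion $\mathfrak{l}\hookrightarrow\mathfrak{k}$ induces an isomorphism in cohomology. Then: (1) for any even central element $X\in\mathfrak{z}$ with $\partial X=0$, the set of solutions $f\in\mathfrak{k}^-_{\mathrm{odd}}$ of $\partial f+\frac12[f,f]_{\mathfrak{k}}\equiv X\pmod{\mathfrak{l}}$ is a (nonempty) homogeneous space for the group $\exp(\mathfrak{k}^-_{\mathrm{even}})\times\mathfrak{l}^-_{\mathrm{odd}}$, where the first factor acts by gauge transformations and the second by translations; (2) the difference $\partial f+\frac12[f,f]_{\mathfrak{k}}-X\in\mathfrak{l}$ is independent of the solution $f$.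
   Context: $\mathfrak{k}^-=\bigoplus_{i<0}\mathfrak{k}^i$; ''even/odd'' refer to the parity of the degree $i$. $\mathfrak{k}^-_{\mathrm{even}}$ is an ordinary nilpotent Lie algebra; $\exp(\mathfrak{k}^-_{\mathrm{even}})$ denotes the corresponding group (the image of $s\mapsto\exp(s)=\sum_N s^N/N!$ in the degree completion of the enveloping algebra, with product given by the Campbell–Hausdorff formula). The gauge action on $\mathfrak{k}^-_{\mathrm{odd}}$ is $\exp(s).f=e^{\mathrm{ad}_s}f-j^R(\mathrm{ad}_s)\partial s$, where $j^R(z)=\frac{e^z-1}{z}$ and $\mathrm{ad}_s=[s,\cdot]_{\mathfrak{k}}$. Similarly $\mathfrak{l}^-_{\mathrm{odd}}=\mathfrak{l}\cap\mathfrak{k}^-_{\mathrm{odd}}$ (for the graded pieces), acting by translation $f\mapsto f+l$. *)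

From HB Require Import structures.
From mathcomp Require Import all_boot all_order all_algebra.
Set Implicit Arguments. Unset Strict Implicit. Unset Printing Implicit Defensive.
Import Order.TTheory GRing.Theory Num.Theory.
Local Open Scope ring_scope.

(* A graded vector space k = (+)_{i <= 0} k^i with k^i = 0 for i < -N is
   represented as a K-module V together with projections [proj n] onto the
   homogeneous component of degree -n (n : nat). *)

Section Defs.
Variables (K : fieldType) (V : lmodType K).

Definition homog (proj : nat -> V -> V) (n : nat) (x : V) : Prop := proj n x = x.

Definition grading (N : nat) (proj : nat -> {linear V -> V}) : Prop :=
  [/\ forall n m x, proj n (proj m x) = if n == m then proj m x else 0,
      forall n x, (N < n)%N -> proj n x = 0
    & forall x, \sum_(n < N.+1) proj n x = x].

Definition sgn (n : nat) : K := (-1) ^+ n.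

Definition dgla (N : nat) (proj : nat -> {linear V -> V})
  (br : V -> V -> V) (d : {linear V -> V}) : Prop :=
  grading N proj /\
      (forall a x y z, br (a *: x + y) z = a *: br x z + br y z)
      /\ (forall a x y z, br z (a *: x + y) = a *: br z x + br z y) /\
      (forall m n x y, homog proj m x -> homog proj n y ->
         homog proj (m + n) (br x y)) /\
      (forall m n x y, homog proj m x -> homog proj n y ->
         br x y = - (sgn (m * n) *: br y x)) /\
      (forall m n x y z, homog proj m x -> homog proj n y ->
         br x (br y z) = br (br x y) z + sgn (m * n) *: br y (br x z)) /\
      (forall n x, homog proj n.+1 x -> homog proj n (d x))
      /\ (forall x, homog proj 0 x -> d x = 0) /\
      (forall x, d (d x) = 0) /\
      (forall m x y, homog proj m x ->
         d (br x y) = br (d x) y + sgn m *: br x (d y)).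

Definition central (br : V -> V -> V) (x : V) : Prop := forall y, br x y = 0.

Definition kminus_odd (proj : nat -> V -> V) (x : V) : Prop :=
  forall n, ~~ odd n -> proj n x = 0.
Definition kminus_even (proj : nat -> V -> V) (x : V) : Prop :=
  forall n, odd n || (n == 0)%N -> proj n x = 0.
Definition even_elt (proj : nat -> V -> V) (x : V) : Prop :=
  forall n, odd n -> proj n x = 0.

(* l is a graded subspace of the center, killed by d, such that the
   inclusion l -> k is a quasi-isomorphism (degreewise iso on cohomology;
   since d = 0 on l, H(l) = l). *)
Definition central_quasi_iso (proj : nat -> V -> V) (br : V -> V -> V)
  (d : V -> V) (l : {pred V}) : Prop :=
  (0 \in l /\ (forall a x y, x \in l -> y \in l -> a *: x + y \in l)) /\
  [/\ (forall n x, x \in l -> proj n x \in l),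
      (forall x, x \in l -> central br x),
      (forall x, x \in l -> d x = 0),
      (* injectivity of H^{-n}(l) -> H^{-n}(k) *)
      (forall n x y, x \in l -> homog proj n x -> homog proj n.+1 y ->
         x = d y -> x = 0)
    & (* surjectivity of H^{-n}(l) -> H^{-n}(k) *)
      (forall n x, homog proj n x -> d x = 0 ->
         exists l0 y, [/\ l0 \in l, homog proj n l0, homog proj n.+1 y
                        & x = l0 + d y])].

Definition curv (br : V -> V -> V) (d : V -> V) (f : V) : V :=
  d f + 2%:R^-1 *: br f f.

(* gauge action  exp(s).f = e^{ad_s} f - j^R(ad_s) (d s),
   j^R(z) = (e^z - 1)/z = sum_m z^m/(m+1)!.  For s in k^-_even, ad_s lowers
   degree by at least 2, so ad_s^m = 0 for m > N and the truncated sums are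
   the full series. *)
Definition gauge (N : nat) (br : V -> V -> V) (d : V -> V) (s f : V) : V :=
  \sum_(m < N.+1) (m`!%:R)^-1 *: iter m (br s) f
  - \sum_(m < N.+1) ((m.+1)`!%:R)^-1 *: iter m (br s) (d s).

End Defs.

From HB Require Import structures.
From mathcomp Require Import all_boot all_order all_algebra.
From mathcomp Require Import zify.
Set Implicit Arguments. Unset Strict Implicit. Unset Printing Implicit Defensive.
Import Order.TTheory GRing.Theory Num.Theory.
Local Open Scope ring_scope.

(* The heart of the matter is gauge invariance of the curvature: if curv f is
   central then curv (exp(s).f) = curv f. Expanding exp(s).f = sum_n g_n by
   degree in s, the degree-n parts c_n of its curvature satisfy
   (n+1) c_(n+1) = [s, c_n], so c_n = ad_s^n (curv f) / n! vanishes for n > 0.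
   Existence and transitivity are then proved by induction along the filtration
   F^p = (+)_(n >= p) k^-n, using that odd elements lie in F^1, so that
   bracketing with them raises the filtration degree. For existence, the Bianchi identity makes the lowest
   component of the defect curv f - X outside l closed; as l -> k is a
   quasi-isomorphism it is l0 + d y with l0 in l, and f - y kills it. For
   transitivity, the lowest component in which two solutions differ is closed
   for the same reason, hence of the form l0 + d y, and changing s by -y and
   the translation by l0 removes it, because exp(s - y).f = exp(s).f + d y to
   first order. Part (2) follows since exp(s).f + l0 has the curvature of f. *)

Section OrdinalSums.
Variable V : nmodType.

Lemma sum_ord_single (F : nat -> V) M j : (forall m, m != j -> F m = 0) ->
  ((M <= j)%N -> F j = 0) -> \sum_(m < M) F m = F j.
Proof.
move=> Fj0 FjM; case: (ltnP j M) => [ltjM | leMj].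
  rewrite (bigD1 (Ordinal ltjM)) //= big1 ?addr0 // => i neqij.
  by apply: Fj0; apply: contra neqij => /eqP eqij; apply/eqP/val_inj.
rewrite FjM // big1 // => i _; apply: Fj0.
by rewrite neq_ltn (leq_trans (ltn_ord i) leMj).
Qed.

Lemma sum_ord_truncate (F : nat -> V) M M' : (M <= M')%N ->
  (forall k, (M <= k)%N -> F k = 0) -> \sum_(k < M') F k = \sum_(k < M) F k.
Proof.
move=> leMM' FM0; rewrite [RHS](big_ord_widen _ F leMM') [RHS]big_mkcond /=.
by apply: eq_bigr => i _; case: ltnP => // /FM0.
Qed.

Lemma sum_antidiag_rev (F : nat -> nat -> V) n :
  \sum_(a < n.+1) F a (n - a)%N = \sum_(a < n.+1) F (n - a)%N a.
Proof.
rewrite (reindex_inj rev_ord_inj) /=; apply: eq_bigr => i _.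
by rewrite subSS subKn // -ltnS.
Qed.

Lemma sum_antidiag (F : nat -> nat -> V) M :
  \sum_(n < M) \sum_(a < n.+1) F a (n - a)%N = \sum_(a < M) \sum_(b < M - a) F a b.
Proof.
elim: M => [|M IH]; first by rewrite !big_ord0.
rewrite big_ord_recr /= IH big_ord_recr /= [RHS]big_ord_recr /= subSnn big_ord1.
rewrite subnn addrA; congr (_ + _); rewrite -big_split /=.
by apply: eq_bigr => i _; rewrite subSn ?big_ord_recr // ltnW.
Qed.

End OrdinalSums.

Section Grading.
Variables (K : fieldType) (V : lmodType K) (N : nat) (proj : nat -> {linear V -> V}).
Hypothesis Hgr : grading N proj.

Lemma projK n m x : proj n (proj m x) = if n == m then proj m x else 0.
Proof. by case: Hgr. Qed.

Lemma proj_gtN n x : (N < n)%N -> proj n x = 0.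
Proof. by case: Hgr => _ + _; apply. Qed.

Lemma sum_proj x : \sum_(n < N.+1) proj n x = x.
Proof. by case: Hgr. Qed.

Lemma homog_proj n x : homog proj n (proj n x).
Proof. by rewrite /homog projK eqxx. Qed.

Lemma proj_homog n m x : homog proj m x -> proj n x = if n == m then x else 0.
Proof. by rewrite /homog => <-; rewrite projK. Qed.

Definition vanish (Q : pred nat) (x : V) := forall n, Q n -> proj n x = 0.

Definition filt p := vanish (fun n => (n < p)%N).
Definition parity (b : bool) := vanish (fun n => odd n != b).

Lemma vanish0 Q : vanish Q 0.
Proof. by move=> n _; rewrite linear0. Qed.

Lemma vanishD Q x y : vanish Q x -> vanish Q y -> vanish Q (x + y).
Proof. by move=> Qx Qy n Qn; rewrite linearD Qx ?Qy ?addr0. Qed.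

Lemma vanishN Q x : vanish Q x -> vanish Q (- x).
Proof. by move=> Qx n Qn; rewrite linearN Qx ?oppr0. Qed.

Lemma vanishB Q x y : vanish Q x -> vanish Q y -> vanish Q (x - y).
Proof. by move=> Qx Qy; apply/vanishD/vanishN. Qed.

Lemma vanishZ Q a x : vanish Q x -> vanish Q (a *: x).
Proof. by move=> Qx n Qn; rewrite linearZ /= Qx ?scaler0. Qed.

Lemma vanish_sum Q I (r : seq I) (P : pred I) (F : I -> V) :
  (forall i, P i -> vanish Q (F i)) -> vanish Q (\sum_(i <- r | P i) F i).
Proof. by move=> QF; apply: big_ind => //; [apply: vanish0 | apply: vanishD]. Qed.

Lemma vanishW (Q Q' : pred nat) x : {subset Q' <= Q} -> vanish Q x -> vanish Q' x.
Proof. by move=> sQ'Q Qx n /sQ'Q; apply: Qx. Qed.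

Lemma filtW p q x : (q <= p)%N -> filt p x -> filt q x.
Proof. by move=> leqp; apply: vanishW => n /leq_trans; apply. Qed.

Lemma filt_eq0 x : filt N.+1 x -> x = 0.
Proof. by move=> x0; rewrite -(sum_proj x) big1 // => n _; apply: x0. Qed.

Lemma filt_sub_proj p x : filt p x -> filt p.+1 (x - proj p x).
Proof.
move=> xp n; rewrite ltnS leq_eqVlt => /orP[/eqP-> | ltnp].
  by rewrite linearB projK eqxx subrr.
by rewrite linearB projK (ltn_eqF ltnp) xp ?subr0.
Qed.

Lemma filt_sub_low p x : filt p (x - \sum_(k < p) proj k x).
Proof.
move=> j ltjp; rewrite linearB linear_sum (@sum_ord_single _ (fun k => proj j (proj k x)) _ j).
- by rewrite projK eqxx subrr.
- by move=> k neqkj; rewrite projK eq_sym (negPf neqkj).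
- by rewrite leqNgt ltjp.
Qed.

Lemma homog_vanish (Q : pred nat) n x : homog proj n x -> ~~ Q n -> vanish Q x.
Proof.
move=> xn nQn k Qk; rewrite (proj_homog _ xn); have [ekn|//] := eqVneq k n.
by move: Qk; rewrite ekn (negPf nQn).
Qed.

Lemma homog_filt n x : homog proj n x -> filt n x.
Proof. by move/homog_vanish; apply; rewrite ltnn. Qed.

Lemma odd_filt1 x : parity true x -> filt 1 x.
Proof. by move=> xodd [|n] // _; apply: xodd. Qed.

Lemma kminus_oddP x : kminus_odd proj x <-> parity true x.
Proof. by split=> x0 n nodd; apply: x0; rewrite ?eqb_id in nodd *. Qed.

Lemma even_eltP x : even_elt proj x <-> parity false x.
Proof. by split=> x0 n nodd; apply: x0; rewrite ?eqbF_neg ?negbK in nodd *. Qed.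

Lemma kminus_even_parity s : kminus_even proj s -> parity false s.
Proof. by move=> s0 n; rewrite eqbF_neg negbK => nodd; apply: s0; rewrite nodd. Qed.

Lemma kminus_even_filt s : kminus_even proj s -> filt 2 s.
Proof. by move=> s0 [|[|n]] // _; apply: s0. Qed.

End Grading.

Section DGLA.
Variables (K : fieldType) (V : lmodType K) (N : nat) (proj : nat -> {linear V -> V})
  (br : V -> V -> V) (d : {linear V -> V}).
Hypothesis Hk : dgla N proj br d.
Let Hgr : grading N proj := Hk.1.

Lemma brZDl a x y z : br (a *: x + y) z = a *: br x z + br y z.
Proof. by case: Hk => _ []. Qed.

Lemma brZDr a x y z : br z (a *: x + y) = a *: br z x + br z y.
Proof. by case: Hk => _ [_ []]. Qed.

Lemma br0l z : br 0 z = 0.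
Proof. by apply: (addrI (br 0 z)); rewrite -{1}(scale1r (br 0 z)) -brZDl !addr0 scale1r. Qed.

Lemma br0r z : br z 0 = 0.
Proof. by apply: (addrI (br z 0)); rewrite -{1}(scale1r (br z 0)) -brZDr !addr0 scale1r. Qed.

Lemma brDl x y z : br (x + y) z = br x z + br y z.
Proof. by have := brZDl 1 x y z; rewrite !scale1r. Qed.

Lemma brDr x y z : br z (x + y) = br z x + br z y.
Proof. by have := brZDr 1 x y z; rewrite !scale1r. Qed.

Lemma brZl a x z : br (a *: x) z = a *: br x z.
Proof. by rewrite -[a *: x]addr0 brZDl br0l addr0. Qed.

Lemma brZr a x z : br z (a *: x) = a *: br z x.
Proof. by rewrite -[a *: x]addr0 brZDr br0r addr0. Qed.

Lemma brNl x z : br (- x) z = - br x z.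
Proof. by rewrite -scaleN1r brZl scaleN1r. Qed.

Lemma brNr x z : br z (- x) = - br z x.
Proof. by rewrite -scaleN1r brZr scaleN1r. Qed.

Lemma brBl x y z : br (x - y) z = br x z - br y z.
Proof. by rewrite brDl brNl. Qed.

Lemma brBr x y z : br z (x - y) = br z x - br z y.
Proof. by rewrite brDr brNr. Qed.

Lemma br_suml I (r : seq I) (P : pred I) (F : I -> V) z :
  br (\sum_(i <- r | P i) F i) z = \sum_(i <- r | P i) br (F i) z.
Proof. exact: (big_morph (br^~ z) (fun x y => brDl x y z) (br0l z)). Qed.

Lemma br_sumr I (r : seq I) (P : pred I) (F : I -> V) z :
  br z (\sum_(i <- r | P i) F i) = \sum_(i <- r | P i) br z (F i).
Proof. exact: (big_morph (br z) (fun x y => brDr x y z) (br0r z)). Qed.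

Lemma br_homog m n x y :
  homog proj m x -> homog proj n y -> homog proj (m + n) (br x y).
Proof. by case: Hk => _ [_ [_ [+ _]]]; apply. Qed.

Lemma brC_homog m n x y : homog proj m x -> homog proj n y ->
  br x y = - (sgn K (m * n) *: br y x).
Proof. by case: Hk => _ [_ [_ [_ [+ _]]]]; apply. Qed.

Lemma br_jacobi_homog m n x y z : homog proj m x -> homog proj n y ->
  br x (br y z) = br (br x y) z + sgn K (m * n) *: br y (br x z).
Proof. by case: Hk => _ [_ [_ [_ [_ [+ _]]]]]; apply. Qed.

Lemma d_homog n x : homog proj n.+1 x -> homog proj n (d x).
Proof. by case: Hk => _ [_ [_ [_ [_ [_ [+ _]]]]]]; apply. Qed.

Lemma d_homog0 x : homog proj 0 x -> d x = 0.
Proof. by case: Hk => _ [_ [_ [_ [_ [_ [_ [+ _]]]]]]]; apply. Qed.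

Lemma d_d x : d (d x) = 0.
Proof. by case: Hk => _ [_ [_ [_ [_ [_ [_ [_ [+ _]]]]]]]]; apply. Qed.

Lemma d_br_homog m x y : homog proj m x ->
  d (br x y) = br (d x) y + sgn K m *: br x (d y).
Proof. by case: Hk => _ [_ [_ [_ [_ [_ [_ [_ [_ +]]]]]]]]; apply. Qed.

Lemma br_proj x y :
  br x y = \sum_(m < N.+1) \sum_(n < N.+1) br (proj m x) (proj n y).
Proof.
rewrite -{1}(sum_proj Hgr x) br_suml; apply: eq_bigr => m _.
by rewrite -{1}(sum_proj Hgr y) br_sumr.
Qed.

Lemma proj_br k x y :
  proj k (br x y) = \sum_(m < N.+1) \sum_(n < N.+1 | (m + n == k)%N) br (proj m x) (proj n y).
Proof.
rewrite br_proj linear_sum; apply: eq_bigr => m _; rewrite linear_sum [RHS]big_mkcond /=.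
apply: eq_bigr => n _.
by rewrite (proj_homog Hgr _ (br_homog (homog_proj Hgr _ _) (homog_proj Hgr _ _))) eq_sym.
Qed.

Lemma filt_br p q x y : filt proj p x -> filt proj q y -> filt proj (p + q) (br x y).
Proof.
move=> xp yq k ltk; rewrite proj_br big1 // => m _; rewrite big1 // => n /eqP eqk.
case: (ltnP m p) => [/xp-> | lepm]; first by rewrite br0l.
case: (ltnP n q) => [/yq-> | leqn]; first by rewrite br0r.
by move: ltk; rewrite -eqk ltnNge leq_add.
Qed.

Lemma parity_br b c x y : parity proj b x -> parity proj c y -> parity proj (b (+) c) (br x y).
Proof.
move=> xb yc k oddk; rewrite proj_br big1 // => m _; rewrite big1 // => n /eqP eqk.
have [oddm | /xb->] := eqVneq (odd m) b; last by rewrite br0l.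
have [oddn | /yc->] := eqVneq (odd n) c; last by rewrite br0r.
by move: oddk; rewrite -eqk oddD oddm oddn eqxx.
Qed.

Lemma proj_d n x : proj n (d x) = d (proj n.+1 x).
Proof.
rewrite -{1}(sum_proj Hgr x) !linear_sum.
rewrite (@sum_ord_single _ (fun m => proj n (d (proj m x))) _ n.+1).
- by rewrite (proj_homog Hgr _ (d_homog (homog_proj Hgr _ _))) eqxx.
- case=> [|m] neqm; first by rewrite d_homog0 ?linear0 //; apply: homog_proj Hgr _ _.
  by rewrite (proj_homog Hgr _ (d_homog (homog_proj Hgr _ _))) eq_sym -eqSS (negPf neqm).
- by move=> ltNn; rewrite (proj_gtN Hgr x ltNn) !linear0.
Qed.

Lemma filt_d p x : filt proj p.+1 x -> filt proj p (d x).
Proof. by move=> xp n ltnp; rewrite proj_d xp ?linear0. Qed.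

Lemma parity_d b x : parity proj b x -> parity proj (~~ b) (d x).
Proof.
move=> xb n oddn; rewrite proj_d xb ?linear0 //=.
by apply: contra oddn => /eqP <-; rewrite negbK.
Qed.

Lemma sgnE n : sgn K n = (-1) ^+ odd n.
Proof. by rewrite signr_odd. Qed.

Lemma brC b c x y : parity proj b x -> parity proj c y ->
  br x y = - ((-1) ^+ (b && c) *: br y x).
Proof.
move=> xb yc; rewrite br_proj (br_proj y) [in RHS]exchange_big /= scaler_sumr -sumrN.
apply: eq_bigr => m _; rewrite scaler_sumr -sumrN; apply: eq_bigr => n _.
have [oddm | /xb->] := eqVneq (odd m) b; last by rewrite br0l br0r scaler0 oppr0.
have [oddn | /yc->] := eqVneq (odd n) c; last by rewrite br0l br0r scaler0 oppr0.
by rewrite (brC_homog (homog_proj Hgr _ _) (homog_proj Hgr _ _)) sgnE oddM oddm oddn.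
Qed.

Lemma br_jacobi b c x y z : parity proj b x -> parity proj c y ->
  br x (br y z) = br (br x y) z + (-1) ^+ (b && c) *: br y (br x z).
Proof.
move=> xb yc.
have -> : br x (br y z) = \sum_(m < N.+1) \sum_(n < N.+1) br (proj m x) (br (proj n y) z).
  rewrite -{1}(sum_proj Hgr x) br_suml; apply: eq_bigr => m _.
  by rewrite -{1}(sum_proj Hgr y) br_suml br_sumr.
have -> : br y (br x z) = \sum_(m < N.+1) \sum_(n < N.+1) br (proj n y) (br (proj m x) z).
  rewrite exchange_big /= -{1}(sum_proj Hgr y) br_suml; apply: eq_bigr => n _.
  by rewrite -{1}(sum_proj Hgr x) br_suml br_sumr.
rewrite (br_proj x y) br_suml scaler_sumr -big_split /=; apply: eq_bigr => m _.
rewrite br_suml scaler_sumr -big_split /=; apply: eq_bigr => n _.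
have [oddm | /xb->] := eqVneq (odd m) b; last by rewrite !br0l br0r scaler0 addr0.
have [oddn | /yc->] := eqVneq (odd n) c; last by rewrite br0r !br0l br0r scaler0 addr0.
by rewrite (br_jacobi_homog _ (homog_proj Hgr _ _) (homog_proj Hgr _ _)) sgnE oddM oddm oddn.
Qed.

Lemma d_br b x y : parity proj b x -> d (br x y) = br (d x) y + (-1) ^+ b *: br x (d y).
Proof.
move=> xb; rewrite -(sum_proj Hgr x) br_suml !linear_sum !br_suml scaler_sumr -big_split.
apply: eq_bigr => m _ /=.
have [oddm | /xb->] := eqVneq (odd m) b; last by rewrite br0l !linear0 !br0l scaler0 addr0.
by rewrite (d_br_homog _ (homog_proj Hgr _ _)) sgnE oddm.
Qed.

Lemma brC_odd x y : parity proj true x -> parity proj true y -> br x y = br y x.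
Proof. by move=> xodd yodd; rewrite (brC xodd yodd) scaleN1r opprK. Qed.

(* Stronger than [central]: graded antisymmetry then also gives [y, z] = 0. *)
Definition central_parts z := forall n, central br (proj n z).

Lemma central_parts_brl z y : central_parts z -> br z y = 0.
Proof. by move=> zc; rewrite -(sum_proj Hgr z) br_suml big1 // => n _; apply: zc. Qed.

Lemma central_parts_brr z y : central_parts z -> br y z = 0.
Proof.
move=> zc; rewrite br_proj big1 // => m _; rewrite big1 // => n _.
by rewrite (brC_homog (homog_proj Hgr _ _) (homog_proj Hgr _ _)) zc scaler0 oppr0.
Qed.

Lemma central_partsD x y : central_parts x -> central_parts y -> central_parts (x + y).
Proof. by move=> xc yc n z; rewrite linearD brDl xc yc addr0. Qed.

(* The degree (n + k) part of [x, y_k] is [x_n, y_k]. *)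
Lemma central_central_parts x : central br x -> central_parts x.
Proof.
move=> xc n y; rewrite -(sum_proj Hgr y) br_sumr big1 // => k _.
have homog_br j : homog proj (j + k) (br (proj j x) (proj k y)).
  exact: br_homog (homog_proj Hgr _ _) (homog_proj Hgr _ _).
have <- : proj (n + k) (br x (proj k y)) = br (proj n x) (proj k y).
  rewrite -{1}(sum_proj Hgr x) br_suml linear_sum.
  rewrite (@sum_ord_single _ (fun j => proj (n + k) (br (proj j x) (proj k y))) _ n).
  - by rewrite (proj_homog Hgr _ (homog_br n)) eqxx.
  - by move=> j neqjn; rewrite (proj_homog Hgr _ (homog_br j)) eqn_add2r eq_sym (negPf neqjn).
  - by move=> ltNn; rewrite (proj_gtN Hgr x ltNn) br0l linear0.
by rewrite xc linear0.
Qed.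

Lemma iter_br0 s n : iter n (br s) 0 = 0.
Proof. by elim: n => //= n ->; rewrite br0r. Qed.

Lemma iter_brD s n x y : iter n (br s) (x + y) = iter n (br s) x + iter n (br s) y.
Proof. by elim: n => //= n ->; rewrite brDr. Qed.

Lemma parity_iter_br s b n y : parity proj false s -> parity proj b y ->
  parity proj b (iter n (br s) y).
Proof. by move=> seven yb; elim: n => //= n; apply: parity_br seven. Qed.

Lemma filt_iter_br s p n y : filt proj 2 s -> filt proj p y ->
  filt proj (n.*2 + p) (iter n (br s) y).
Proof.
move=> s2 yp; elim: n => //= n IH.
by have := filt_br s2 IH; rewrite doubleS addnA add2n.
Qed.

Lemma iter_br_eq0 s n y : filt proj 2 s -> (N < n.*2)%N -> iter n (br s) y = 0.
Proof.
move=> s2 ltNn; apply: (filt_eq0 Hgr).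
by apply: filtW _ (filt_iter_br (n := n) (p := 0) s2 _); rewrite ?addn0.
Qed.

Lemma br_sum_antidiag (g : nat -> V) M : (forall k, (M <= k)%N -> g k = 0) ->
  br (\sum_(k < M) g k) (\sum_(k < M) g k) =
  \sum_(n < M + M) \sum_(a < n.+1) br (g a) (g (n - a)%N).
Proof.
move=> gM0; rewrite (sum_antidiag (fun a b => br (g a) (g b))).
rewrite (@sum_ord_truncate _ (fun a => \sum_(b < M + M - a) br (g a) (g b)) M _ (leq_addr M M));
  last first.
  by move=> a /gM0 ga0; rewrite big1 // => b _; rewrite ga0 br0l.
rewrite br_suml; apply: eq_bigr => a _; rewrite br_sumr.
have leM : (M <= M + M - a)%N by rewrite -addnBA ?leq_addr // ltnW.
by rewrite (@sum_ord_truncate _ (fun b => br (g a) (g b)) M _ leM) // => b /gM0->; rewrite br0r.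
Qed.

Lemma sum_antidiag_weight_odd (g : nat -> V) M : (forall n, parity proj true (g n)) ->
  M%:R *: \sum_(a < M.+1) br (g a) (g (M - a)%N) =
  2%:R *: \sum_(a < M.+1) a%:R *: br (g a) (g (M - a)%N).
Proof.
move=> godd.
have rev : \sum_(a < M.+1) (M - a)%:R *: br (g a) (g (M - a)%N) =
           \sum_(a < M.+1) a%:R *: br (g a) (g (M - a)%N).
  rewrite (sum_antidiag_rev (fun a b => b%:R *: br (g a) (g b))).
  by apply: eq_bigr => a _; rewrite brC_odd.
rewrite [in RHS]scaler_nat mulr2n -{1}rev -big_split scaler_sumr /=.
by apply: eq_bigr => a _; rewrite -scalerDl -natrD subnK // -ltnS.
Qed.

Definition ad_series (c : nat -> K) s x := \sum_(m < N.+1) c m *: iter m (br s) x.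

Lemma gaugeE s f : gauge N br d s f =
  ad_series (fun m => (m`!%:R)^-1) s f - ad_series (fun m => ((m.+1)`!%:R)^-1) s (d s).
Proof. by []. Qed.

Lemma ad_seriesD c s x y : ad_series c s (x + y) = ad_series c s x + ad_series c s y.
Proof. by rewrite /ad_series -big_split; apply: eq_bigr => m _; rewrite iter_brD scalerDr. Qed.

Lemma filt_iter_br_perturb s t p m y : filt proj 2 s -> filt proj p.+2 t -> filt proj 1 y ->
  filt proj p.+3 (iter m (br (s + t)) y - iter m (br s) y).
Proof.
move=> s2 tp y1; have st2 : filt proj 2 (s + t) by apply: vanishD (filtW _ tp).
elim: m => [|m IH] /=; first by rewrite subrr; apply: vanish0.
rewrite brDl addrAC -brBr; apply: vanishD; first by apply: filtW _ (filt_br s2 IH); lia.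
have Y1 : filt proj 1 (iter m (br (s + t)) y).
  by apply: filtW _ (filt_iter_br (n := m) st2 y1); lia.
by rewrite -addn1; apply: filt_br tp Y1.
Qed.

Lemma filt_ad_series_perturb c s t p y : filt proj 2 s -> filt proj p.+2 t -> filt proj 1 y ->
  filt proj p.+3 (ad_series c (s + t) y - ad_series c s y).
Proof.
move=> s2 tp y1; rewrite -sumrB; apply: vanish_sum => m _.
by rewrite -scalerBr; apply/vanishZ/filt_iter_br_perturb.
Qed.

Lemma filt_ad_series_sub c s p y : c 0%N = 1 -> filt proj 2 s -> filt proj p y ->
  filt proj p.+2 (ad_series c s y - y).
Proof.
move=> c01 s2 yp; rewrite /ad_series big_ord_recl /= c01 scale1r addrC addKr.
apply: vanish_sum => m _; apply/vanishZ/(filtW _ (filt_iter_br (n := m.+1) s2 yp)).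
rewrite /bump /=; lia.
Qed.

Lemma gauge_perturb s t f p : filt proj 2 s -> filt proj p.+2 t -> filt proj 1 f ->
  filt proj p.+3 (gauge N br d (s + t) f - gauge N br d s f + d t).
Proof.
move=> s2 tp f1; have st2 : filt proj 2 (s + t) by apply: vanishD (filtW _ tp).
have regroup (a1 a0 b1 b0 c1 c0 : V) :
    a1 - (b1 + c1) - (a0 - b0) + c0 = (a1 - a0) - (b1 - b0) - (c1 - c0).
  by rewrite !opprD !opprK !addrA [LHS](@GRing.add V).[ACl (1*4*2*5*3*6)].
rewrite !gaugeE linearD ad_seriesD regroup.
apply: vanishB; first apply: vanishB.
- exact: filt_ad_series_perturb.
- exact: filt_ad_series_perturb (filt_d s2).
- by apply: filt_ad_series_sub st2 (filt_d tp); rewrite /= invr1.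
Qed.

Hypothesis charK : [pchar K] =i pred0.

Lemma natf_neq0 n : n.+1%:R != 0 :> K.
Proof. by rewrite ((pcharf0P K).1 charK). Qed.

Lemma scale_half_double (x : V) : (2%:R : K)^-1 *: (x + x) = x.
Proof. by rewrite -mulr2n -scaler_nat scalerA mulVf ?scale1r ?(natf_neq0 1). Qed.

Lemma curv_add_central h z : central_parts z -> d z = 0 -> curv br d (h + z) = curv br d h.
Proof.
move=> zc dz0; rewrite /curv linearD dz0 addr0 !brDl !brDr.
by rewrite (central_parts_brr _ zc) !(central_parts_brl _ zc) !addr0.
Qed.

Lemma curvD_odd h e : parity proj true h -> parity proj true e ->
  curv br d (h + e) = curv br d h + d e + br h e + (2%:R : K)^-1 *: br e e.
Proof.
move=> hodd eodd; rewrite /curv linearD !brDl !brDr (brC_odd eodd hodd).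
have -> : br h h + br h e + (br h e + br e e) = br h h + (br h e + br h e) + br e e.
  by rewrite !addrA.
by rewrite 2!scalerDr scale_half_double !addrA (addrAC _ (d e)).
Qed.

(* For odd [f], Jacobi reads [f,[f,f]] = -2 [f,[f,f]]; this is where 3 must be invertible. *)
Lemma br_odd_cube f : parity proj true f -> br f (br f f) = 0.
Proof.
move=> fodd; have := br_jacobi f fodd fodd.
rewrite (brC (parity_br fodd fodd) fodd) /= expr1 expr0 scaleN1r scale1r => J.
have : (3%:R : K) *: br f (br f f) = 0.
  by rewrite scaler_nat mulrS mulr2n {1}J -opprD addNr.
by move/eqP; rewrite scaler_eq0 (negPf (natf_neq0 2)) => /eqP.
Qed.

Lemma bianchi f : parity proj true f -> d (curv br d f) = br (curv br d f) f.
Proof.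
move=> fodd; have dfeven := parity_d fodd; have ffeven := parity_br fodd fodd.
rewrite /curv linearD d_d add0r linearZ /= (d_br _ fodd) expr1 scaleN1r.
rewrite (brC fodd dfeven) /= expr0 scale1r opprK scale_half_double.
by rewrite brDl brZl (brC ffeven fodd) /= expr0 scale1r br_odd_cube // oppr0 scaler0 addr0.
Qed.

Lemma curv_perturb f y p : parity proj true f -> parity proj true y -> filt proj p.+1 y ->
  filt proj p.+2 (curv br d (f + y) - curv br d f - d y).
Proof.
move=> fodd yodd yp; rewrite curvD_odd // -addrA -opprD -[curv br d f + d y + _ + _]addrA.
rewrite [curv br d f + d y + _]addrC addrK.
apply: vanishD; first by apply: filt_br (odd_filt1 fodd) yp.
by apply/vanishZ/(filtW _ (filt_br yp yp)); rewrite addSn ltnS leq_addl.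
Qed.

Section GaugeInvariance.
Variables s f : V.
Hypotheses (seven : kminus_even proj s) (fodd : parity proj true f).
Let s_even := kminus_even_parity seven.
Let s2 := kminus_even_filt seven.

(* [gauge_coef n] and [curv_coef n] are the parts of exp(s).f and of its
   curvature that are homogeneous of degree n in s. *)
Definition gauge_coef n : V :=
  (n`!%:R : K)^-1 *: iter n (br s) f
  - (if n is n'.+1 then (n`!%:R : K)^-1 *: iter n' (br s) (d s) else 0).

Local Notation g := gauge_coef.

Definition curv_coef n : V :=
  d (g n) + (2%:R : K)^-1 *: \sum_(a < n.+1) br (g a) (g (n - a)).

Lemma parity_gauge_coef n : parity proj true (gauge_coef n).
Proof.
apply: vanishB; first exact/vanishZ/parity_iter_br.
case: n => [|n] /=; first exact: vanish0.
by apply: vanishZ; exact: parity_iter_br s_even (parity_d s_even).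
Qed.

Lemma gauge_coefS n :
  n.+1%:R *: gauge_coef n.+1 = br s (gauge_coef n) - (if n == 0 then d s else 0).
Proof.
rewrite /gauge_coef scalerBr !scalerA factS natrM invfM mulrA mulfV ?natf_neq0 // mul1r.
case: n => [|n] /=; first by rewrite fact0 invr1 !scale1r brBr br0r subr0.
by rewrite brBr !brZr subr0.
Qed.

Lemma curv_coefS n : n.+1%:R *: curv_coef n.+1 = br s (curv_coef n).
Proof.
have d_coefS : n.+1%:R *: d (g n.+1) = br (d s) (g n) + br s (d (g n)).
  rewrite -linearZ /= gauge_coefS linearB (d_br _ s_even) expr0 scale1r.
  by case: (n == 0); rewrite /= ?d_d !linear0 addr0.
have shift : \sum_(a < n.+2) a%:R *: br (g a) (g (n.+1 - a)%N) =
             \sum_(a < n.+1) br (br s (g a)) (g (n - a)%N) - br (d s) (g n).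
  rewrite big_ord_recl /= scale0r add0r.
  under eq_bigr => a _ do rewrite /bump /= add1n subSS -brZl gauge_coefS brBl.
  rewrite sumrB; congr (_ - _).
  by rewrite big_ord_recl /= subn0 big1 ?addr0 // => a _; rewrite br0l.
have jacobi_sum : br s (\sum_(a < n.+1) br (g a) (g (n - a)%N)) =
    \sum_(a < n.+1) br (br s (g a)) (g (n - a)%N)
    + \sum_(a < n.+1) br (br s (g a)) (g (n - a)%N).
  rewrite br_sumr; under eq_bigr => a _ do
    rewrite (br_jacobi _ s_even (parity_gauge_coef a)) /= expr0 scale1r.
  rewrite big_split /= (sum_antidiag_rev (fun a b => br (g a) (br s (g b)))).
  congr (_ + _); apply: eq_bigr => a _.
  by rewrite (brC_odd (parity_gauge_coef _) (parity_br s_even (parity_gauge_coef a))).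
rewrite /curv_coef scalerDr d_coefS scalerA [_ * _^-1]mulrC -scalerA.
rewrite (sum_antidiag_weight_odd _ parity_gauge_coef) shift scalerA mulVf ?(natf_neq0 1) //.
rewrite scale1r [br s (_ + _)]brDr [br s (_ *: _)]brZr jacobi_sum scale_half_double.
by rewrite [LHS]addrC subrKA addrC.
Qed.

Lemma curv_coefE n : curv_coef n = (n`!%:R : K)^-1 *: iter n (br s) (curv_coef 0).
Proof.
elim: n => [|n IH]; first by rewrite fact0 invr1 scale1r.
apply: (@scalerI _ _ n.+1%:R); first exact: natf_neq0.
rewrite curv_coefS IH brZr /= scalerA factS natrM invfM mulrA mulfV ?natf_neq0 //.
by rewrite mul1r.
Qed.

Lemma curv_coef0 : curv_coef 0 = curv br d f.
Proof. by rewrite /curv_coef big_ord1 /gauge_coef fact0 invr1 scale1r subr0. Qed.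

Lemma gauge_coef_eq0 k : (N.+2 <= k)%N -> gauge_coef k = 0.
Proof.
move=> leNk; rewrite /gauge_coef iter_br_eq0 //; last lia.
rewrite scaler0 sub0r; case: k leNk => [|k] // leNk.
by rewrite iter_br_eq0 ?scaler0 ?oppr0 //; lia.
Qed.

Lemma gauge_coef_sum : gauge N br d s f = \sum_(k < N.+2) gauge_coef k.
Proof.
rewrite /gauge /gauge_coef sumrB [X in _ = _ - X]big_ord_recl [X in _ = X - _]big_ord_recr.
by rewrite (@iter_br_eq0 s N.+1) ?scaler0 /= ?add0r ?addr0 //; lia.
Qed.

Lemma curv_gauge_coef_sum :
  curv br d (\sum_(k < N.+2) gauge_coef k) = \sum_(n < N.+2 + N.+2) curv_coef n.
Proof.
rewrite /curv /curv_coef [RHS]big_split /= -scaler_sumr linear_sum br_sum_antidiag //.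
  congr (_ + _); rewrite [RHS](@sum_ord_truncate _ (fun k => d (g k)) N.+2) ?leq_addr //.
  by move=> k /gauge_coef_eq0->; rewrite linear0.
exact: gauge_coef_eq0.
Qed.

Lemma parity_gauge : parity proj true (gauge N br d s f).
Proof. by rewrite gauge_coef_sum; apply: vanish_sum => k _; apply: parity_gauge_coef. Qed.

Hypothesis curv_central : central_parts (curv br d f).

Lemma curv_gauge : curv br d (gauge N br d s f) = curv br d f.
Proof.
rewrite gauge_coef_sum curv_gauge_coef_sum big_ord_recl big1 ?addr0 ?curv_coef0 // => n _.
by rewrite curv_coefE /= -iterS iterSr curv_coef0 central_parts_brr // iter_br0 scaler0.
Qed.

End GaugeInvariance.

Section Solutions.
Variables (l : {pred V}) (X : V).
Hypotheses (Hl : central_quasi_iso proj br d l)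
  (HXc : central br X) (HXe : even_elt proj X) (HdX : d X = 0).

HB.instance Definition _ := GRing.isSubmodClosed.Build K V l (GRing.submod_closed_semi Hl.1).

Lemma proj_l n x : x \in l -> proj n x \in l.
Proof. by case: Hl => _ [+ _ _ _ _]; apply. Qed.

Lemma central_parts_l x : x \in l -> central_parts x.
Proof. by case: Hl => _ [_ + _ _ _] xl n; apply; apply: proj_l. Qed.

Lemma d_l x : x \in l -> d x = 0.
Proof. by case: Hl => _ [_ _ + _ _]; apply. Qed.

Lemma exact_l_eq0 n x y :
  x \in l -> homog proj n x -> homog proj n.+1 y -> x = d y -> x = 0.
Proof. by case: Hl => _ [_ _ _ + _]; apply. Qed.

Lemma closed_l_decomp n x : homog proj n x -> d x = 0 ->
  exists l0 y, [/\ l0 \in l, homog proj n l0, homog proj n.+1 y & x = l0 + d y].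
Proof. by case: Hl => _ [_ _ _ _ +]; apply. Qed.

Definition solution f := kminus_odd proj f /\ curv br d f - X \in l.

Lemma central_parts_curv f : curv br d f - X \in l -> central_parts (curv br d f).
Proof.
move=> fl; rewrite -(subrK X (curv br d f)).
exact: central_partsD (central_parts_l fl) (central_central_parts HXc).
Qed.

Lemma curv_gauge_translate f s z : solution f -> kminus_even proj s -> z \in l ->
  curv br d (gauge N br d s f + z) = curv br d f.
Proof.
move=> [/kminus_oddP fodd fl] seven zl.
rewrite (curv_add_central _ (central_parts_l zl) (d_l zl)).
exact: curv_gauge (central_parts_curv fl).
Qed.

Lemma solution_gauge f s z : solution f -> kminus_even proj s -> z \in l ->
  kminus_odd proj z -> solution (gauge N br d s f + z).
Proof.
move=> fsol seven zl /kminus_oddP zodd; have [/kminus_oddP fodd fl] := fsol.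
split; last by rewrite curv_gauge_translate.
by apply/kminus_oddP; apply: vanishD zodd; apply: parity_gauge.
Qed.

Definition approx_solution p f :=
  parity proj true f /\ forall k, (k < p)%N -> proj k (curv br d f - X) \in l.

Lemma parity_curv_sub f : parity proj true f -> parity proj false (curv br d f - X).
Proof.
move=> fodd; apply: vanishB; last exact/even_eltP.
by apply: vanishD; [apply: parity_d fodd | apply/vanishZ/(parity_br fodd fodd)].
Qed.

(* Bianchi identity d (curv f) = [curv f, f], and [F^(p+1), F^1] <= F^(p+2). *)
Lemma d_proj_defect p f : approx_solution p f -> d (proj p (curv br d f - X)) = 0.
Proof.
case=> fodd; case: p => [_ | q low]; first exact: d_homog0 (homog_proj Hgr 0 _).
rewrite -proj_d linearB HdX subr0 bianchi //.
set R := curv br d f - X; set L := \sum_(k < q.+1) proj k R.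
have Ll : L \in l by apply: rpred_sum => k _; apply: low.
have -> : curv br d f = X + L + (R - L) by rewrite -addrA subrKC addrC subrK.
rewrite 2!brDl (central_parts_brl _ (central_central_parts HXc)).
rewrite (central_parts_brl _ (central_parts_l Ll)) !add0r.
by rewrite (filt_br (filt_sub_low Hgr (p := q.+1) R) (odd_filt1 fodd)) // addn1.
Qed.

Lemma approx_solutionS p f : approx_solution p f -> exists f', approx_solution p.+1 f'.
Proof.
move=> [fodd low]; have [podd | peven] := boolP (odd p).
  exists f; split=> // k; rewrite ltnS leq_eqVlt => /orP[/eqP-> | /low //].
  by rewrite (parity_curv_sub fodd) ?rpred0 // podd.
set R := curv br d f - X.
have [l1 [y [l1l _ yp Rp]]] :=
  closed_l_decomp (homog_proj Hgr p R) (d_proj_defect (conj fodd low)).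
have yodd : parity proj true y by apply: (homog_vanish Hgr yp); rewrite /= peven.
exists (f - y); split=> [|k ltkp]; first exact: vanishB.
have := curv_perturb fodd (vanishN yodd) (vanishN (homog_filt Hgr yp)).
rewrite linearN opprK => /(_ k (ltnW ltkp)) higher0.
have -> : curv br d (f - y) - X = curv br d (f - y) - curv br d f + d y + R - d y.
  by rewrite /R [in RHS]addrAC [in RHS]addrK [in RHS]addrA [in RHS]subrK.
rewrite linearB linearD higher0 add0r proj_d (proj_homog Hgr _ yp) eqSS.
move: ltkp; rewrite ltnS leq_eqVlt => /orP[/eqP-> | ltkp]; first by rewrite eqxx Rp addrK.
by rewrite (ltn_eqF ltkp) linear0 subr0; apply: low.
Qed.

Lemma exists_approx_solution p : exists f, approx_solution p f.
Proof.
elim: p => [|p [f /approx_solutionS //]].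
by exists 0; split=> [|//]; apply: vanish0.
Qed.

Lemma exists_solution : exists f, solution f.
Proof.
have [f [fodd low]] := exists_approx_solution N.+1.
exists f; split; first exact/kminus_oddP.
by rewrite -(sum_proj Hgr (curv br d f - X)); apply: rpred_sum => k _; apply: low.
Qed.

Definition gauge_approx p f f' := exists s z,
  [/\ kminus_even proj s, z \in l, kminus_odd proj z
    & filt proj p (f' - (gauge N br d s f + z))].

Lemma gauge_approxS p f f' : solution f -> solution f' ->
  gauge_approx p f f' -> gauge_approx p.+1 f f'.
Proof.
move=> fsol [f'odd f'l] [s [z [seven zl zodd ep]]].
set h := gauge N br d s f + z; set e := f' - h.
have [/kminus_oddP hodd hl] : solution h := solution_gauge fsol seven zl zodd.
have eodd : parity proj true e by apply: vanishB => //; apply/kminus_oddP.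
have [peven | podd] := boolP (~~ odd p).
  exists s, z; split=> // n; rewrite ltnS leq_eqVlt => /orP[/eqP-> | /ep //].
  by apply: eodd; rewrite eqb_id.
case: p ep podd => [//|q] ep; rewrite /= negbK => qeven.
have d_proj_e : d (proj q.+1 e) = proj q (curv br d f' - curv br d h).
  have /(_ q (leqnSn _)) := curv_perturb hodd eodd ep.
  by rewrite subrKC linearB proj_d => /eqP; rewrite subr_eq0 => /eqP.
have d_proj_e0 : d (proj q.+1 e) = 0.
  apply: (exact_l_eq0 _ (d_homog (homog_proj Hgr _ _)) (homog_proj Hgr q.+1 _) erefl).
  by rewrite d_proj_e; apply/proj_l; rewrite -(subrKA X) -[X - _]opprB; apply: rpredB.
have [l1 [y [l1l l1q yq e_decomp]]] := closed_l_decomp (homog_proj Hgr q.+1 e) d_proj_e0.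
exists (s - y), (z + l1); split.
- by apply: vanishB seven _; apply: (homog_vanish Hgr yq); rewrite /= orbF negbK.
- exact: rpredD.
- by apply: vanishD zodd _; apply: (homog_vanish Hgr l1q); rewrite /= negbK.
have regroup (G G' P : V) : f' - (G' + (z + l1)) =
    (f' - (G + z) - P) + (P - (l1 + d y)) - (G' - G + d (- y)).
  rewrite linearN !opprD !opprK !addrA.
  by rewrite [RHS](@GRing.add V).[ACl (1*8*3*6*4*5*2*9*7*10)] !subrK.
rewrite (regroup (gauge N br d s f) _ (proj q.+1 e)) {2}e_decomp subrr addr0.
apply: vanishB; first exact: (filt_sub_proj Hgr ep).
have [/kminus_oddP fodd _] := fsol.
apply: filtW _ (gauge_perturb (kminus_even_filt seven) (vanishN (homog_filt Hgr yq)) _) => //.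
exact: odd_filt1 fodd.
Qed.

Lemma gauge_equiv f f' : solution f -> solution f' ->
  exists s z, [/\ kminus_even proj s, z \in l, kminus_odd proj z
                & f' = gauge N br d s f + z].
Proof.
move=> fsol f'sol.
have [s [z [seven zl zodd close]]] : gauge_approx N.+1 f f'.
  elim: N.+1 => [|p]; last exact: gauge_approxS.
  by exists 0, 0; split; rewrite ?rpred0 //; apply: vanish0.
by exists s, z; split=> //; apply/eqP; rewrite -subr_eq0; apply/eqP/(filt_eq0 Hgr).
Qed.

End Solutions.
End DGLA.

Theorem theorem3p8 (K : fieldType) (charK : [pchar K] =i pred0)
  (V : lmodType K) (N : nat) (proj : nat -> {linear V -> V})
  (br : V -> V -> V) (d : {linear V -> V}) (l : {pred V})
  (Hk : dgla N proj br d)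
  (Hl : central_quasi_iso (fun n => proj n) br d l)
  (X : V) (HXc : central br X) (HXe : even_elt (fun n => proj n) X)
  (HdX : d X = 0) :
  let S := fun f : V => kminus_odd (fun n => proj n) f /\ curv br d f - X \in l in
  (* (1) the solution set is a nonempty homogeneous space for
     exp(k^-_even) x l^-_odd acting by (s, l0).f = exp(s).f + l0 *)
  [/\ (exists f, S f),
      (forall f s l0, S f -> kminus_even (fun n => proj n) s ->
         l0 \in l -> kminus_odd (fun n => proj n) l0 ->
         S (gauge N br d s f + l0)),
      (forall f f', S f -> S f' ->
         exists s l0, [/\ kminus_even (fun n => proj n) s, l0 \in l,
                          kminus_odd (fun n => proj n) l0
                        & f' = gauge N br d s f + l0])
    & (* (2) curv f - X is independent of the solution f *)
      (forall f f', S f -> S f' -> curv br d f - X = curv br d f' - X)].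
Proof.
move=> S; split.
- exact: (exists_solution Hk charK Hl HXc HXe HdX).
- exact: (solution_gauge Hk charK Hl HXc).
- exact: (gauge_equiv Hk charK Hl HXc).
- move=> f f' fsol f'sol.
  have [s [z [seven zl _ ->]]] := gauge_equiv Hk charK Hl HXc fsol f'sol.
  by rewrite (curv_gauge_translate Hk charK Hl HXc).
Qed.
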